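(* If $\mathcal{F}$ is a finitary argumentation framework, then there exists a well-ordering $<$ of $A_{\mathcal{F}}$ such that each argument $a$ attacks only finitely many arguments $b$ with $b<a$.
   Context: An argumentation framework is a pair $\mathcal{F}=(A_{\mathcal{F}},R_{\mathcal{F}})$ with $R_{\mathcal{F}}\subseteq A_{\mathcal{F}}\times A_{\mathcal{F}}$; $a$ attacks $b$ means $(a,b)\in R_{\mathcal{F}}$. $\mathcal{F}$ is finitary if every argument is attacked by only finitely many arguments. *)

(* An argumentation framework F = (A_F, R_F) is modelled by a
   carrier type [A] (the arguments) and a relation [R : A -> A -> Prop];
   [R a b] means "a attacks b". *)
From Stdlib Require Import List.
Import ListNotations.

Definition finite_set {A : Type} (P : A -> Prop) : Prop :=
  exists l : list A, forall x, P x -> In x l.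

Definition finitary {A : Type} (R : A -> A -> Prop) : Prop :=
  forall b : A, finite_set (fun a => R a b).

Definition well_ordering {A : Type} (lt : A -> A -> Prop) : Prop :=
  (forall x, ~ lt x x) /\
  (forall x y z, lt x y -> lt y z -> lt x z) /\
  (forall x y, lt x y \/ x = y \/ lt y x) /\
  well_founded lt.

(* Fix a well-ordering [lt0] of the arguments.  Let [m a] be the [lt0]-least
   argument that [a] reaches along a chain of attacks, and [d a] the length of
   one such chain; order the arguments lexicographically by [m], then [d], then
   [lt0].  If [a] attacks [b], everything [b] reaches is reached by [a], so
   [m a] is not above [m b]; thus an argument [b] below [a] and attacked by it
   has [m b = m a] and [d b <= d a], i.e. [b] reaches [m a] within [d a] attacks.
   Since only finitely many arguments attack any given one, only finitely many
   arguments reach a fixed argument within a bounded number of attacks. *)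

From Stdlib Require Import List Classical IndefiniteDescription Arith.
From mathcomp Require ssreflect ssrbool eqtype boolp wochoice.

Lemma finite_set_mono {A : Type} (P Q : A -> Prop) :
  finite_set Q -> (forall x, P x -> Q x) -> finite_set P.
Proof. intros [l Hl] HPQ; exists l; auto. Qed.

Lemma finite_set_singleton {A : Type} (x : A) : finite_set (fun y => y = x).
Proof. exists (x :: nil); intros y ->; left; reflexivity. Qed.

Lemma finite_set_or {A : Type} (P Q : A -> Prop) :
  finite_set P -> finite_set Q -> finite_set (fun x => P x \/ Q x).
Proof.
  intros [l1 H1] [l2 H2]; exists (l1 ++ l2).
  intros x [Hx | Hx]; apply in_or_app; auto.
Qed.

Lemma finite_set_bigcup {I A : Type} (P : I -> Prop) (Q : I -> A -> Prop) :
  finite_set P -> (forall i, finite_set (Q i)) ->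
  finite_set (fun x => exists i, P i /\ Q i x).
Proof.
  intros [l Hl] HQ.
  apply (finite_set_mono _ (fun x => exists i, In i l /\ Q i x));
    [| intros x [i [Pi Qix]]; eauto].
  clear Hl; induction l as [| i l IHl].
  - exists nil; intros x [i [[] _]].
  - apply (finite_set_mono _ _ (finite_set_or _ _ (HQ i) IHl)).
    intros x [j [[<- | Hj] Qjx]]; [left | right; exists j]; auto.
Qed.

Lemma well_founded_iff_minimal {A : Type} (lt : A -> A -> Prop) :
  well_founded lt <->
  forall P : A -> Prop, (exists x, P x) ->
    exists z, P z /\ forall y, P y -> ~ lt y z.
Proof.
  split.
  - intros Hwf P [x Px]; apply NNPP; intros Hnomin.
    induction (Hwf x) as [x _ IHx].
    apply Hnomin; exists x; split; [exact Px |].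
    intros y Py Hyx; exact (IHx y Hyx Py).
  - intros Hmin x; apply NNPP; intros Hx.
    destruct (Hmin (fun y => ~ Acc lt y) (ex_intro _ x Hx)) as [z [Hz Hzmin]].
    apply Hz; constructor; intros y Hyz.
    apply NNPP; intros Hy; exact (Hzmin y Hy Hyz).
Qed.

Lemma well_founded_min_fun {I A : Type} (lt : A -> A -> Prop) (P : I -> A -> Prop) :
  well_founded lt -> (forall i, exists x, P i x) ->
  exists f : I -> A, forall i, P i (f i) /\ forall x, P i x -> ~ lt x (f i).
Proof.
  intros Hwf HP.
  apply (functional_choice (fun i x => P i x /\ forall y, P i y -> ~ lt y x)); intro i.
  exact (proj1 (well_founded_iff_minimal lt) Hwf (P i) (HP i)).
Qed.

Section ZermeloWellOrdering.
Import ssreflect ssrbool eqtype boolp wochoice.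

Lemma exists_well_ordering (A : Type) : exists lt : A -> A -> Prop, well_ordering lt.
Proof.
have [le le_wo] := well_ordering_principle {classic A}.
have le_chain : wo_chain le predT by move=> P _; apply: le_wo.
have le_total := wo_chainW le_chain.
have le_anti := wo_chain_antisymmetric le_chain.
have le_min (P : A -> Prop) :
    (exists x, P x) -> exists z, P z /\ forall x, P x -> le z x.
  move=> [x Px]; have [|z [[Pz lbz] _]] := le_wo (fun y => `[< P y >]).
    by exists x; apply/asboolP.
  exists z; split; first exact/asboolP.
  by move=> y Py; apply: lbz; apply/asboolP.
have le_trans (x y z : A) : le x y -> le y z -> le x z.
  move=> le_xy le_yz.
  have [|w [Hw lbw]] := le_min (fun t => t = x \/ t = y \/ t = z); first by exists x; left.
  case: Hw lbw => [-> | [-> | ->]] lbw; first by apply: lbw; right; right.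
    suff -> : x = y by [].
    by apply: le_anti => //; rewrite le_xy lbw //; left.
  suff <- : y = z by [].
  by apply: le_anti => //; rewrite le_yz lbw //; right; left.
exists (fun x y => le x y /\ x <> y); split; [|split; [|split]].
- by move=> x [_ ].
- move=> x y z [le_xy ne_xy] [le_yz ne_yz]; split; first exact: le_trans le_yz.
  by move=> eq_xz; subst z; apply: ne_xy; apply: le_anti; rewrite ?le_xy ?le_yz.
- move=> x y; case: (pselect (x = y)) => [-> | ne_xy]; first by right; left.
  by case/orP: (le_total x y isT isT) => le_xy; [left | right; right];
    split=> // eq_xy; apply: ne_xy; rewrite eq_xy.
- apply/well_founded_iff_minimal => P /le_min [z [Pz lbz]].
  exists z; split=> // y Py [le_yz ne_yz]; apply: ne_yz.
  by apply: le_anti; rewrite ?le_yz ?lbz.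
Qed.

End ZermeloWellOrdering.

Lemma well_ordering_nat : well_ordering lt.
Proof.
  split; [exact Nat.lt_irrefl | split; [exact Nat.lt_trans | split]].
  - intros x y; destruct (Nat.lt_total x y) as [H | [H | H]]; auto.
  - exact lt_wf.
Qed.

Definition lex_key {A B : Type} (ltB : B -> B -> Prop) (k : A -> B)
  (ltA : A -> A -> Prop) (x y : A) : Prop :=
  ltB (k x) (k y) \/ (k x = k y /\ ltA x y).

Lemma well_ordering_lex_key {A B : Type} (ltB : B -> B -> Prop) (k : A -> B)
  (ltA : A -> A -> Prop) :
  well_ordering ltB -> well_ordering ltA -> well_ordering (lex_key ltB k ltA).
Proof.
  intros [irrB [transB [triB wfB]]] [irrA [transA [triA wfA]]].
  unfold lex_key; split; [| split; [| split]].
  - intros x [H | [_ H]]; [exact (irrB _ H) | exact (irrA _ H)].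
  - intros x y z [Hxy | [Exy Hxy]] [Hyz | [Eyz Hyz]].
    + left; eauto.
    + left; rewrite <- Eyz; exact Hxy.
    + left; rewrite Exy; exact Hyz.
    + right; split; [congruence | eauto].
  - intros x y; destruct (triB (k x) (k y)) as [H | [E | H]]; auto.
    destruct (triA x y) as [H | [H | H]]; auto.
  - intro a; remember (k a) as b eqn:Eb; revert a Eb.
    induction (wfB b) as [b _ IHb]; intros a Eb.
    induction (wfA a) as [a _ IHa]; constructor.
    intros x [Hx | [Ex Hx]].
    + subst b; exact (IHb _ Hx x eq_refl).
    + apply IHa; congruence.
Qed.

Section AttackChains.
Context {A : Type} (R : A -> A -> Prop).

(* [reaches_within x n c]: [c = c_0], [R c_i c_(i+1)] for [i < j <= n], and [c_j = x]. *)
Inductive reaches_within (x : A) : nat -> A -> Prop :=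
| reaches_within_refl n : reaches_within x n x
| reaches_within_step n c c' :
    R c c' -> reaches_within x n c' -> reaches_within x (S n) c.

Lemma reaches_within_mono x n k c :
  reaches_within x n c -> n <= k -> reaches_within x k c.
Proof.
  intros Hc; revert k; induction Hc as [n | n c c' Hcc' Hc' IH]; intros k Hk.
  - constructor.
  - destruct k as [| k]; [inversion Hk |].
    apply (reaches_within_step _ _ _ c'); auto using le_S_n.
Qed.

Lemma finite_reaches_within :
  finitary R -> forall x n, finite_set (reaches_within x n).
Proof.
  intros Hfin x n; induction n as [| n IHn].
  - apply (finite_set_mono _ _ (finite_set_singleton x)).
    intros c Hc; inversion Hc; reflexivity.
  - apply (finite_set_mono _ _ (finite_set_or _ _ (finite_set_singleton x)
      (finite_set_bigcup _ (fun c' c => R c c') IHn Hfin))).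
    intros c Hc; inversion Hc; [left | right]; eauto.
Qed.

Variables (lt0 : A -> A -> Prop) (m : A -> A) (d : A -> nat).
Hypothesis m_minimal : forall a x n, reaches_within x n a -> ~ lt0 x (m a).
Hypothesis d_reaches : forall a, reaches_within (m a) (d a) a.

Lemma attacked_below_reaches_within a b :
  R a b -> lex_key lt0 m (lex_key lt d lt0) b a -> reaches_within (m a) (d a) b.
Proof.
  intros Hab Hba.
  assert (Hm : ~ lt0 (m b) (m a)).
  { apply (m_minimal a _ (S (d b))), (reaches_within_step _ _ _ b); auto. }
  destruct Hba as [Hlt | [Em Hba]]; [contradiction |].
  rewrite <- Em; apply (reaches_within_mono _ (d b)); [apply d_reaches |].
  destruct Hba as [Hd | [Ed _]]; [apply Nat.lt_le_incl, Hd | rewrite Ed; reflexivity].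
Qed.

End AttackChains.

Theorem lemma1 (A : Type) (R : A -> A -> Prop) :
  finitary R ->
  exists lt : A -> A -> Prop,
    well_ordering lt /\
    forall a : A, finite_set (fun b => R a b /\ lt b a).
Proof.
  intros Hfin.
  destruct (exists_well_ordering A) as [lt0 Hlt0].
  destruct (well_founded_min_fun lt0 (fun a x => exists n, reaches_within R x n a))
    as [m Hm]; [apply Hlt0 | intro a; exists a, 0; constructor |].
  destruct (functional_choice (fun a n => reaches_within R (m a) n a)) as [d Hd];
    [intro a; apply Hm |].
  exists (lex_key lt0 m (lex_key lt d lt0)); split.
  - auto using well_ordering_lex_key, well_ordering_nat.
  - intro a; apply (finite_set_mono _ _ (finite_reaches_within R Hfin (m a) (d a))).
    intros b [Hab Hba]; apply (attacked_below_reaches_within R lt0 m d); auto.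
    intros a' x n Hx; apply (proj2 (Hm a')); exists n; exact Hx.
Qed.
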